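(* Let $\Lambda>0$ and let $a_0,b_0>0$ be constants. Put $\theta(x^8)=\sqrt{2\Lambda}\,x^8$ and let $U\subset\mathbb{R}^8$ be the open set of points $(x^1,\dots,x^8)$ with $\sin\theta(x^8)\neq 0$. For either choice of the sign $\epsilon\in\{+1,-1\}$ and either choice of the sign $\sigma\in\{+1,-1\}$, define on $U$ $$a(x^4,x^8)=a_0\,e^{\epsilon\frac13\sqrt{\Lambda/2}\,x^4}\,\big(\sin^2\theta(x^8)\big)^{1/12},\qquad b(x^4,x^8)=b_0\,e^{-\epsilon\frac13\sqrt{\Lambda/2}\,x^4}\,\big(\sin^2\theta(x^8)\big)^{1/12},$$ $$\varphi(x^4,x^8)=\sigma\,\tfrac12\sqrt{\tfrac56}\,\ln\!\Big[\tan^2\!\big(\tfrac12\theta(x^8)\big)\Big].$$ Then the metric $$ds^2=a^2\big[(dx^1)^2+(dx^2)^2+(dx^3)^2\big]-(dx^4)^2-b^2\big[(dx^5)^2+(dx^6)^2+(dx^7)^2\big]+(dx^8)^2$$ together with the scalar field $\varphi$ satisfies on $U$ the coupled Einstein–massless-scalar field equations $$G_{\mu\nu}+\Lambda g_{\mu\nu}=T_{\mu\nu},\qquad T_{\mu\nu}=\partial_\mu\varphi\,\partial_\nu\varphi-\tfrac12 g_{\mu\nu}\,g^{\alpha\beta}\partial_\alpha\varphi\,\partial_\beta\varphi,\qquad \frac{1}{\sqrt{|\det g|}}\,\partial_\mu\!\Big(\sqrt{|\det g|}\,g^{\mu\nu}\partial_\nu\varphi\Big)=0 .$$ Moreover,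 for this solution the relative expansion rate $\ell=\tfrac12\,\partial_{x^4}\ln(b/a)$ equals the constant $-\epsilon\,\tfrac13\sqrt{\Lambda/2}$, and the functions $a,b,\varphi$ are periodic in $x^8$ with common minimal positive period $\pi\sqrt{2/\Lambda}$ (so this common period equals $2\pi$ exactly when $\Lambda=\tfrac12$).
   Context: Coordinates $(x^1,\dots,x^8)$ on (an open subset of) $\mathbb{R}^8$; the metric has signature $(4,4)$, with $x^1,x^2,x^3,x^8$ spacelike and $x^4,\dots,x^7$ timelike. $G_{\mu\nu}=R_{\mu\nu}-\tfrac12 R\,g_{\mu\nu}$ is the Einstein tensor of the Levi-Civita connection of $g$, with the Landau–Lifshitz (MTW ''spacelike'') sign conventions for the Riemann and Ricci tensors. Units are chosen with $8\pi\mathbb{G}=1$. $\Lambda$ is the cosmological constant. The scalar field $\varphi$ is real, massless, minimally coupled, with zero potential (action density $\sqrt{|\det g|}\,[\tfrac12(R-2\Lambda)-\tfrac12 g^{\mu\nu}\partial_\mu\varphi\,\partial_\nu\varphi]$). *)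

From HB Require Import structures.
From mathcomp Require Import all_boot all_order all_algebra.
From mathcomp Require Import all_classical all_reals all_analysis.
Set Implicit Arguments. Unset Strict Implicit. Unset Printing Implicit Defensive.
Import Order.TTheory GRing.Theory Num.Theory.
Import numFieldNormedType.Exports.
Local Open Scope classical_set_scope.
Local Open Scope ring_scope.

(* Points of R^8 are row vectors; coordinate x^(k+1) is  x 0 k  with k : 'I_8. *)
Definition ev {R : realType} (i : 'I_8) : 'rV[R]_8 := delta_mx 0 i.

Definition partial {R : realType} (i : 'I_8) (f : 'rV[R]_8 -> R) (x : 'rV[R]_8) : R :=
  derive1 (fun t : R => f (x + t *: ev i)) 0.

Definition partially_derivable {R : realType} (i : 'I_8) (f : 'rV[R]_8 -> R)
  (x : 'rV[R]_8) : Prop :=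
  derivable (fun t : R => f (x + t *: ev i)) 0 1.

Definition twice_partially_derivable_on {R : realType} (U : set 'rV[R]_8)
  (f : 'rV[R]_8 -> R) : Prop :=
  forall x, U x -> forall i j : 'I_8,
    partially_derivable i f x /\ partially_derivable i (partial j f) x.

Section Geometry.
Variable R : realType.
Variable g : 'rV[R]_8 -> 'M[R]_8.

Definition ginv (x : 'rV[R]_8) : 'M[R]_8 := invmx (g x).

Definition christoffel (l m n : 'I_8) (x : 'rV[R]_8) : R :=
  2^-1 * \sum_(s < 8) ginv x l s *
    (partial m (fun y => g y s n) x + partial n (fun y => g y s m) x
     - partial s (fun y => g y m n) x).

(* Landau-Lifshitz / MTW:
   R^a_{b c d} = d_c Gamma^a_{b d} - d_d Gamma^a_{b c}
                 + Gamma^a_{c l} Gamma^l_{b d} - Gamma^a_{d l} Gamma^l_{b c} *)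
Definition riemann (a b c d : 'I_8) (x : 'rV[R]_8) : R :=
  partial c (christoffel a b d) x - partial d (christoffel a b c) x
  + \sum_(l < 8) (christoffel a c l x * christoffel l b d x
                  - christoffel a d l x * christoffel l b c x).

Definition ricci (b d : 'I_8) (x : 'rV[R]_8) : R :=
  \sum_(a < 8) riemann a b a d x.

Definition scalar_curv (x : 'rV[R]_8) : R :=
  \sum_(m < 8) \sum_(n < 8) ginv x m n * ricci m n x.

Definition einstein (m n : 'I_8) (x : 'rV[R]_8) : R :=
  ricci m n x - 2^-1 * scalar_curv x * g x m n.

Definition stress (phi : 'rV[R]_8 -> R) (m n : 'I_8) (x : 'rV[R]_8) : R :=
  partial m phi x * partial n phi x
  - 2^-1 * g x m n *
    \sum_(a < 8) \sum_(b < 8) ginv x a b * partial a phi x * partial b phi x.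

Definition box (phi : 'rV[R]_8 -> R) (x : 'rV[R]_8) : R :=
  (Num.sqrt `|\det (g x)|)^-1 *
  \sum_(m < 8) partial m
     (fun y => Num.sqrt `|\det (g y)| * \sum_(n < 8) ginv y m n * partial n phi y) x.

End Geometry.

Definition i4 : 'I_8 := inord 3.
Definition i8 : 'I_8 := inord 7.

Definition sol_theta {R : realType} (L : R) (x : 'rV[R]_8) : R :=
  Num.sqrt (2 * L) * x 0 i8.

Definition sol_U {R : realType} (L : R) : set 'rV[R]_8 :=
  [set x | sin (sol_theta L x) != 0].

Definition sol_a {R : realType} (L a0 eps : R) (x : 'rV[R]_8) : R :=
  a0 * expR (eps * 3^-1 * Num.sqrt (L / 2) * x 0 i4)
     * powR (sin (sol_theta L x) ^+ 2) (12^-1).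

Definition sol_b {R : realType} (L b0 eps : R) (x : 'rV[R]_8) : R :=
  b0 * expR (- (eps * 3^-1 * Num.sqrt (L / 2) * x 0 i4))
     * powR (sin (sol_theta L x) ^+ 2) (12^-1).

Definition sol_phi {R : realType} (L sigma : R) (x : 'rV[R]_8) : R :=
  sigma * 2^-1 * Num.sqrt (5 / 6) * ln (tan (2^-1 * sol_theta L x) ^+ 2).

Definition sol_metric {R : realType} (L a0 b0 eps : R) (x : 'rV[R]_8) : 'M[R]_8 :=
  \matrix_(i, j)
    (if i == j then
       (if (val i < 3)%N then sol_a L a0 eps x ^+ 2
        else if (val i == 3)%N then -1
        else if (val i < 7)%N then - sol_b L b0 eps x ^+ 2
        else 1)
     else 0).

(* The metric is diagonal and depends only on x^4 and x^8, so at a point its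
   Christoffel symbols and curvature are polynomial in A = a^2, B = b^2,
   q = cot theta and the constants kappa = d theta/dx^8, alpha = d ln a/dx^4,
   because the derivatives close up: d_4 A = 2 alpha A, d_8 A = (kappa q / 3) A,
   the same for B with alpha replaced by -alpha, and d_8 q = -kappa (1 + q^2).
   This yields R_mn = (L/3) g_mn + (5L/3)(1 + q^2) d_m8 d_n8, which is exactly the
   trace-adjusted stress of d_8 phi = sigma sqrt(5/6) kappa / sin theta.  The
   scalar field is harmonic since sqrt|g| g^88 d_8 phi is proportional to
   (a b)^3 / sin theta = a0^3 b0^3 |sin theta| / sin theta, locally constant.
   Shifting x^8 by pi sqrt(2/L) moves theta by 2 pi, and no smaller shift
   works because phi determines cos theta. *)

From HB Require Import structures.
From mathcomp Require Import all_boot all_order all_algebra.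
From mathcomp Require Import all_classical all_reals all_analysis.
From mathcomp Require Import ring lra.
Import Order.TTheory GRing.Theory Num.Theory.
Import numFieldNormedType.Exports.
Local Open Scope classical_set_scope.
Local Open Scope ring_scope.

Set Implicit Arguments. Unset Strict Implicit. Unset Printing Implicit Defensive.

Section PartialDerivative.
Variable R : realType.
Implicit Types (f h : 'rV[R]_8 -> R) (x : 'rV[R]_8) (i j : 'I_8).

Definition is_partial i f x (df : R) :=
  is_derive (0 : R) (1 : R) (fun t : R => f (x + t *: ev i)) df.

Lemma shift_ev0 i x : x + (0 : R) *: ev i = x.
Proof. by rewrite scale0r addr0. Qed.

Lemma shift_ev_coord i j x (t : R) :
  (x + t *: ev i) 0 j = x 0 j + (if i == j then t else 0).
Proof.
rewrite /ev !mxE eqxx /= (eq_sym j i).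
by case: (i == j); rewrite ?mulr1 ?mulr0.
Qed.

Lemma is_partial_val i f x df : is_partial i f x df -> partial i f x = df.
Proof. by move=> H; rewrite /partial derive1E; apply: derive_val. Qed.

Lemma is_partial_derivable i f x df :
  is_partial i f x df -> partially_derivable i f x.
Proof. by case. Qed.

Lemma is_partial_eq i f x df df' :
  is_partial i f x df -> df = df' -> is_partial i f x df'.
Proof. by move=> ? <-. Qed.

Lemma is_partial_cst i (c : R) x : is_partial i (fun=> c) x 0.
Proof. exact: is_derive_cst. Qed.

Lemma is_partialD i f h x df dh : is_partial i f x df -> is_partial i h x dh ->
  is_partial i (fun y => f y + h y) x (df + dh).
Proof. exact: is_deriveD. Qed.

Lemma is_partialN i f x df :
  is_partial i f x df -> is_partial i (fun y => - f y) x (- df).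
Proof. exact: is_deriveN. Qed.

Lemma is_partialB i f h x df dh : is_partial i f x df -> is_partial i h x dh ->
  is_partial i (fun y => f y - h y) x (df - dh).
Proof. exact: is_deriveB. Qed.

Lemma is_partialM i f h x df dh : is_partial i f x df -> is_partial i h x dh ->
  is_partial i (fun y => f y * h y) x (df * h x + f x * dh).
Proof.
move=> Hf Hh; have := is_deriveM Hf Hh; rewrite /= !shift_ev0 => H.
by apply: (is_derive_eq H); rewrite /GRing.scale /= addrC mulrC.
Qed.

Lemma is_partial_comp i f x df (u : R -> R) du :
  is_partial i f x df -> is_derive (f x) 1 u du ->
  is_partial i (fun y => u (f y)) x (du * df).
Proof.
move=> Hf Hu; apply: (is_derive1_comp _ Hf).
by rewrite /= shift_ev0.
Qed.

Lemma is_partialV i f x df : f x != 0 -> is_partial i f x df ->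
  is_partial i (fun y => (f y)^-1) x (- (f x)^-2 * df).
Proof.
move=> fx Hf; have fx' : (fun t : R => f (x + t *: ev i)) 0 != 0.
  by rewrite /= shift_ev0.
by have := is_deriveV fx' Hf; rewrite /= shift_ev0.
Qed.

Lemma near_eq_is_partial i f h x df :
  (\forall t \near (0 : R), f (x + t *: ev i) = h (x + t *: ev i)) ->
  is_partial i f x df -> is_partial i h x df.
Proof. exact: near_eq_is_derive. Qed.

Lemma is_partial_if i (b : bool) f x df : is_partial i f x df ->
  is_partial i (fun y => if b then f y else 0) x (if b then df else 0).
Proof. by case: b => // _; exact: is_partial_cst. Qed.

Lemma is_partial_coord i j x :
  is_partial i (fun y => y 0 j) x (if i == j then 1 else 0).
Proof.
rewrite /is_partial.
have -> : (fun t : R => (x + t *: ev i) 0 j) =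
          (fun t => x 0 j + (if i == j then t else 0)).
  by apply/funext => t; rewrite shift_ev_coord.
case: (i == j); last exact: is_derive_cst.
by apply: (is_derive_eq (is_deriveD (is_derive_cst _ _ _) (is_derive_id _ _))); rewrite add0r.
Qed.

Lemma partial_if i (b : bool) f x :
  partial i (fun y => if b then f y else 0) x = if b then partial i f x else 0.
Proof. by case: b => //; rewrite /partial derive1_cst. Qed.

Lemma is_partial_near_neq0 i f x df : is_partial i f x df -> f x != 0 ->
  \forall t \near (0 : R), f (x + t *: ev i) != 0.
Proof.
move=> /is_partial_derivable/derivable1_diffP/differentiable_continuous C fx.
by have := cvgr_neq0 _ C; rewrite /= shift_ev0; apply.
Qed.

End PartialDerivative.

Section DiagonalMetric.
Variables (R : realType) (g : 'rV[R]_8 -> 'M[R]_8) (d : 'rV[R]_8 -> 'I_8 -> R).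
Hypothesis gE : forall y, g y = diag_mx (\row_i d y i).
Implicit Types (y : 'rV[R]_8) (l m n s : 'I_8).

Lemma g_diag_entry y m n : g y m n = if m == n then d y m else 0.
Proof. by rewrite gE !mxE; case: (m == n); rewrite ?mulr1n ?mulr0n. Qed.

Lemma ginv_diag y l s : (forall i, d y i != 0) ->
  ginv g y l s = if l == s then (d y l)^-1 else 0.
Proof.
move=> d0; set N : 'M[R]_8 := diag_mx (\row_i (d y i)^-1).
have gN : g y *m N = 1%:M.
  rewrite gE mul_diag_mx; apply/matrixP => i j; rewrite !mxE.
  by case: (i == j); rewrite ?mulr1n ?mulr0n ?mulr0 ?divff.
have [ug _] := mulmx1_unit gN.
have -> : ginv g y = N.
  by rewrite /ginv -[RHS]mul1mx -(mulVmx ug) -mulmxA gN mulmx1.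
by rewrite /N !mxE; case: (l == s); rewrite ?mulr1n ?mulr0n.
Qed.

Lemma partial_g_diag y m s n :
  partial m (fun z => g z s n) y = if s == n then partial m (fun z => d z s) y else 0.
Proof.
rewrite -partial_if; congr partial; apply/funext => z.
exact: g_diag_entry.
Qed.

Lemma christoffel_diag y l m n : (forall i, d y i != 0) ->
  christoffel g l m n y = (2 * d y l)^-1 *
    ((if l == n then partial m (fun z => d z l) y else 0)
     + (if l == m then partial n (fun z => d z l) y else 0)
     - (if m == n then partial l (fun z => d z m) y else 0)).
Proof.
move=> d0; rewrite /christoffel.
under eq_bigr => s _ do rewrite ginv_diag // !partial_g_diag.
rewrite (bigD1 l) //= big1 ?addr0; last first.
  by move=> s /negPf; rewrite eq_sym => ->; rewrite mul0r.
by rewrite eqxx invfM mulrA.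
Qed.

End DiagonalMetric.

(* formal_g n, formal_dg m n and formal_ddg c m n are the values at a point of
   g_nn, d_m g_nn and d_c d_m g_nn, computed with the derivative rules of the
   header (k and al stand for kappa and alpha, r for sqrt (L / 2)).  Indices are
   nat and the tests Nat.eqb/Nat.ltb, so that each curvature component reduces by
   cbv to a rational expression. *)
Section FormalCurvature.
Variable R : realFieldType.
Variables (A B k q al r : R).

Definition formal_g (n : nat) : R :=
  if Nat.ltb n 3 then A else if Nat.eqb n 3 then -1 else if Nat.ltb n 7 then - B else 1.

Definition formal_dg (m n : nat) : R :=
  if Nat.eqb m 3 then
    (if Nat.ltb n 3 then 2 * al * A
     else if Nat.leb 4 n && Nat.ltb n 7 then 2 * al * B else 0)
  else if Nat.eqb m 7 then
    (if Nat.ltb n 3 then k * q / 3 * A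
     else if Nat.leb 4 n && Nat.ltb n 7 then - (k * q / 3 * B) else 0)
  else 0.

Definition formal_ddg (c m n : nat) : R :=
  if Nat.eqb m 3 then
    (if Nat.ltb n 3 then
       (if Nat.eqb c 3 then 4 * al ^+ 2 * A
        else if Nat.eqb c 7 then 2 * al * (k * q / 3) * A else 0)
     else if Nat.leb 4 n && Nat.ltb n 7 then
       (if Nat.eqb c 3 then - (4 * al ^+ 2 * B)
        else if Nat.eqb c 7 then 2 * al * (k * q / 3) * B else 0)
     else 0)
  else if Nat.eqb m 7 then
    (if Nat.ltb n 3 then
       (if Nat.eqb c 3 then k * q / 3 * (2 * al * A)
        else if Nat.eqb c 7 then k / 3 * (- k * (1 + q ^+ 2) * A + q * (k * q / 3) * A)
        else 0)
     else if Nat.leb 4 n && Nat.ltb n 7 then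
       (if Nat.eqb c 3 then - (k * q / 3 * - (2 * al * B))
        else if Nat.eqb c 7 then - (k / 3 * (- k * (1 + q ^+ 2) * B + q * (k * q / 3) * B))
        else 0)
     else 0)
  else 0.

Definition bracket (D : nat -> nat -> R) (l m n : nat) : R :=
  (if Nat.eqb l n then D m l else 0) + (if Nat.eqb l m then D n l else 0)
  - (if Nat.eqb m n then D l m else 0).

Definition formal_christoffel (l m n : nat) : R :=
  (2 * formal_g l)^-1 * bracket formal_dg l m n.

Definition formal_dchristoffel (c l m n : nat) : R :=
  - (2 * formal_dg c l) / (2 * formal_g l) ^+ 2 * bracket formal_dg l m n
  + (2 * formal_g l)^-1 * bracket (formal_ddg c) l m n.

Definition sum8 (F : nat -> R) : R :=
  F 0%N + F 1%N + F 2%N + F 3%N + F 4%N + F 5%N + F 6%N + F 7%N.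

Definition formal_riemann (a b c d : nat) : R :=
  formal_dchristoffel c a b d - formal_dchristoffel d a b c
  + sum8 (fun l => formal_christoffel a c l * formal_christoffel l b d
                   - formal_christoffel a d l * formal_christoffel l b c).

Definition formal_ricci (b d : nat) : R := sum8 (fun a => formal_riemann a b a d).

Definition ricci_closed_form (b d : nat) : R :=
  if Nat.eqb b d then
    2 * r ^+ 2 / 3 * formal_g b
    + (if Nat.eqb b 7 then 5 * (2 * r ^+ 2) / 3 * (1 + q ^+ 2) else 0)
  else 0.

Lemma formal_ricciE (b d : nat) : A != 0 -> B != 0 -> k = 2 * r ->
  al = r / 3 \/ al = - (r / 3) -> (b < 8)%N -> (d < 8)%N ->
  formal_ricci b d = ricci_closed_form b d.
Proof.
move=> A0 B0 hk hal.
case: b => [|[|[|[|[|[|[|[|b]]]]]]]] // _; case: d => [|[|[|[|[|[|[|[|d]]]]]]]] // _.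
all: cbv beta iota zeta delta [formal_ricci formal_riemann ricci_closed_form sum8
  formal_dchristoffel formal_christoffel bracket formal_g formal_dg formal_ddg
  Nat.eqb Nat.ltb Nat.leb andb].
all: by rewrite hk; case: hal => ->; field; rewrite ?A0 ?B0.
Qed.

End FormalCurvature.

Section HalfAngle.
Variable R : realType.
Implicit Types t u : R.

Lemma sin_double_half t : sin t = 2 * sin (2^-1 * t) * cos (2^-1 * t).
Proof.
have {1}-> : t = 2^-1 * t + 2^-1 * t by field.
by rewrite sinD; ring.
Qed.

Lemma sin_cos_half_neq0 t : sin t != 0 ->
  sin (2^-1 * t) != 0 /\ cos (2^-1 * t) != 0.
Proof.
by rewrite sin_double_half !mulf_eq0 !negb_or => /andP[/andP[_ ->] ->].
Qed.

Lemma tan_half_sqr_gt0 t : sin t != 0 -> 0 < tan (2^-1 * t) ^+ 2.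
Proof.
case/sin_cos_half_neq0 => s0 c0.
by rewrite exprn_even_gt0 //= /tan mulf_neq0 ?invr_eq0.
Qed.

Lemma tan_half_sqr t : sin t != 0 ->
  1 + cos t != 0 /\ tan (2^-1 * t) ^+ 2 = (1 - cos t) / (1 + cos t).
Proof.
case/sin_cos_half_neq0 => _ c0; set w := 2^-1 * t.
have ct : cos t = cos w ^+ 2 - sin w ^+ 2.
  have -> : t = w + w by rewrite /w; field.
  by rewrite cosD; ring.
have hp : 1 + cos t = 2 * cos w ^+ 2 by rewrite ct sin2cos2; ring.
have hm : 1 - cos t = 2 * sin w ^+ 2 by rewrite ct cos2sin2; ring.
split; first by rewrite hp mulf_neq0 // expf_neq0.
by rewrite hp hm /tan; field.
Qed.

Lemma is_derive_ln_tan_half_sqr t : sin t != 0 ->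
  is_derive t 1 (fun s => ln (tan (2^-1 * s) ^+ 2)) (2 / sin t).
Proof.
move=> st; have [s0 c0] := sin_cos_half_neq0 st.
have H : is_derive t 1 (fun s : R => 2^-1 * s) 2^-1.
  have H := is_deriveZ 2^-1 (is_derive_id t (1 : R)).
  by apply: (is_derive_eq H); rewrite /GRing.scale /= mulr1.
have T := is_derive1_comp (is_derive_tan c0) H.
have H2 := is_deriveM T T.
have := is_derive1_comp (g := (tan \o *%R 2^-1) * (tan \o *%R 2^-1))
  (is_derive1_ln (tan_half_sqr_gt0 st)) H2.
move=> H3; apply: (is_derive_eq H3); rewrite sin_double_half /tan /GRing.scale /=.
by field; rewrite s0 c0.
Qed.

Lemma cos_eq_of_ln_tan_half_sqr t u : sin t != 0 -> sin u != 0 ->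
  ln (tan (2^-1 * t) ^+ 2) = ln (tan (2^-1 * u) ^+ 2) -> cos t = cos u.
Proof.
move=> st su /(ln_inj _ _); rewrite !posrE !tan_half_sqr_gt0 // => /(_ isT isT).
have [pt ->] := tan_half_sqr st; have [pu ->] := tan_half_sqr su.
by move/eqP; rewrite eqr_div // => /eqP; nra.
Qed.

Lemma cos_shift_invariant_ge2pi (be : R) : 0 < be ->
  (forall t, sin t != 0 -> cos (t + be) = cos t) -> pi *+ 2 <= be.
Proof.
move=> be0 inv; rewrite leNgt; apply/negP => be2.
have pi0 := pi_gt0 R.
have sbe : sin be = 0.
  move: (inv (pi / 2)); rewrite sin_pihalf oner_eq0 cos_pihalf addrC cosDpihalf.
  by move=> /(_ isT) /eqP; rewrite oppr_eq0 => /eqP.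
have sp4 : 0 < sin (pi / 4 : R) by apply: sin_gt0_pi; apply/andP; split; lra.
have cp4 : 0 < cos (pi / 4 : R) by apply: cos_gt0_pihalf; apply/andP; split; lra.
have cbe : cos be = 1.
  have := inv (pi / 4) (lt0r_neq0 sp4); rewrite cosD sbe mulr0 subr0 => E.
  by apply: (mulfI (lt0r_neq0 cp4)); rewrite E mulr1.
have sh : 0 < sin (be / 2) by apply: sin_gt0_pi; apply/andP; split; lra.
have : cos be = 1 - 2 * sin (be / 2) ^+ 2.
  set h := be / 2; have -> : be = h + h by rewrite /h; field.
  by rewrite cosD -!expr2 cos2sin2; ring.
rewrite cbe => E; have : sin (be / 2) ^+ 2 = 0 by lra.
by move/eqP; rewrite expf_eq0 /= (negbTE (lt0r_neq0 sh)).
Qed.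

End HalfAngle.

Lemma nat_eqbE n m : Nat.eqb n m = (n == m).
Proof. by elim: n m => [|n IH] [|m] //=; rewrite IH eqSS. Qed.

Lemma nat_lebE n m : Nat.leb n m = (n <= m)%N.
Proof. by elim: n m => [|n IH] [|m] //=; rewrite IH ltnS. Qed.

Lemma nat_ltbE n m : Nat.ltb n m = (n < m)%N.
Proof. by rewrite /Nat.ltb nat_lebE. Qed.

Lemma ord_eqbE (i j : 'I_8) : (i == j) = Nat.eqb (val i) (val j).
Proof. by rewrite nat_eqbE. Qed.

Lemma i4_eqbE (i : 'I_8) : (i == i4) = Nat.eqb (val i) 3.
Proof. by rewrite ord_eqbE /i4 /= inordK. Qed.

Lemma i8_eqbE (i : 'I_8) : (i == i8) = Nat.eqb (val i) 7.
Proof. by rewrite ord_eqbE /i8 /= inordK. Qed.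

Lemma i4_neq_i8 : (i4 == i8) = false.
Proof. by rewrite /i4 /i8 -val_eqE /= !inordK. Qed.

Lemma eqb3_eqb7 n : Nat.eqb n 3 -> Nat.eqb n 7 = false.
Proof. by rewrite !nat_eqbE => /eqP ->. Qed.

Lemma formal_g_neq0 (R : realFieldType) (A B : R) n :
  A != 0 -> B != 0 -> formal_g A B n != 0.
Proof.
move=> A0 B0; rewrite /formal_g; case: (Nat.ltb n 3) => //; case: (Nat.eqb n 3).
  by rewrite oppr_eq0 oner_eq0.
by case: (Nat.ltb n 7); rewrite ?oppr_eq0 ?oner_eq0.
Qed.

Lemma big_ord8 (R : realFieldType) (F : nat -> R) : \sum_(l < 8) F (val l) = sum8 F.
Proof. by rewrite !big_ord_recr big_ord0 /= add0r. Qed.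

Section Solution.
Variables (R : realType) (L a0 b0 eps sigma : R).
Hypotheses (hL : 0 < L) (ha0 : 0 < a0) (hb0 : 0 < b0).
Hypotheses (heps : eps = 1 \/ eps = -1) (hsigma : sigma = 1 \/ sigma = -1).
Implicit Types (x y : 'rV[R]_8) (i j : 'I_8).

Local Notation theta := (sol_theta L).
Local Notation a := (sol_a L a0 eps).
Local Notation b := (sol_b L b0 eps).
Local Notation phi := (sol_phi L sigma).
Local Notation g := (sol_metric L a0 b0 eps).

Definition kappa : R := Num.sqrt (2 * L).
Definition rho : R := Num.sqrt (L / 2).
Definition alpha : R := eps * 3^-1 * rho.

Definition sinth y := sin (theta y).
Definition costh y := cos (theta y).
Definition cotth y := costh y / sinth y.
Definition sinpow y := powR (sinth y ^+ 2) 12^-1.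
Definition asq y := a y ^+ 2.
Definition bsq y := b y ^+ 2.

Definition along i j (v : R) := if i == j then v else 0.
Definition along48 i (u v : R) := if i == i4 then u else if i == i8 then v else 0.

Lemma aE y : a y = a0 * expR (alpha * y 0 i4) * sinpow y. Proof. by []. Qed.
Lemma bE y : b y = b0 * expR (- alpha * y 0 i4) * sinpow y.
Proof. by rewrite mulNr. Qed.

Lemma kappa_gt0 : 0 < kappa.
Proof. by rewrite sqrtr_gt0 mulr_gt0. Qed.

Lemma kappaE : kappa = 2 * rho.
Proof.
rewrite /kappa /rho; have -> : 2 * L = 2 ^+ 2 * (L / 2) by field.
by rewrite sqrtrM ?sqrtr_sqr ?ger0_norm // exprn_ge0.
Qed.

Lemma rho_sqr : rho ^+ 2 = L / 2.
Proof. by rewrite sqr_sqrtr // divr_ge0 // ltW. Qed.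

Lemma alphaE : alpha = rho / 3 \/ alpha = - (rho / 3).
Proof. by rewrite /alpha; case: heps => ->; [left | right]; ring. Qed.

Lemma is_partial_theta i x : is_partial i theta x (along i i8 kappa).
Proof.
rewrite /sol_theta; apply: is_partial_eq.
  exact: is_partialM (is_partial_cst i kappa x) (is_partial_coord i i8 x).
by rewrite /along mul0r add0r; case: (i == i8); rewrite ?mulr1 ?mulr0.
Qed.

Lemma is_partial_sinth i x : is_partial i sinth x (along i i8 (kappa * costh x)).
Proof.
apply: is_partial_eq; first exact: is_partial_comp (is_partial_theta i x) (is_derive_sin _).
by rewrite /along; case: (i == i8); rewrite ?mulr0 // mulrC.
Qed.

Lemma is_partial_costh i x : is_partial i costh x (along i i8 (- (kappa * sinth x))).
Proof.
apply: is_partial_eq; first exact: is_partial_comp (is_partial_theta i x) (is_derive_cos _).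
by rewrite /along; case: (i == i8); rewrite ?mulr0 // mulrC mulrN.
Qed.

Lemma is_partial_cotth i x : sinth x != 0 ->
  is_partial i cotth x (along i i8 (- kappa * (1 + cotth x ^+ 2))).
Proof.
move=> s0; apply: is_partial_eq.
  exact: is_partialM (is_partial_costh i x) (is_partialV s0 (is_partial_sinth i x)).
rewrite /along /cotth; case: (i == i8); last by rewrite !mulr0 mul0r add0r.
by field.
Qed.

Lemma is_partial_sinpow i x : sinth x != 0 ->
  is_partial i sinpow x (along i i8 (kappa * cotth x / 6 * sinpow x)).
Proof.
move=> s0; have s2 : 0 < sinth x ^+ 2 by rewrite exprn_even_gt0.
apply: is_partial_eq.
  exact: is_partial_comp (is_partialM (is_partial_sinth i x) (is_partial_sinth i x))
                         (is_derive1_powR 12^-1 s2).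
rewrite /along /cotth /sinpow; case: (i == i8); last by rewrite !(mulr0, mul0r, addr0).
rewrite powRB ?(gt_eqF s2) ?implybT // powRr1 ?ltW //.
by field.
Qed.

Lemma is_partial_expR_x4 i x (c : R) :
  is_partial i (fun y => expR (c * y 0 i4)) x (along i i4 (c * expR (c * x 0 i4))).
Proof.
apply: is_partial_eq.
  exact: is_partial_comp (is_partialM (is_partial_cst i c x) (is_partial_coord i i4 x))
                         (is_derive_expR _).
by rewrite /along /=; case: (i == i4); ring.
Qed.

Lemma is_partial_a i x : sinth x != 0 ->
  is_partial i a x (along48 i alpha (kappa * cotth x / 6) * a x).
Proof.
move=> s0; apply: is_partial_eq.
  exact: is_partialM (is_partialM (is_partial_cst i a0 x) (is_partial_expR_x4 i x alpha))
                     (is_partial_sinpow i s0).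
rewrite aE /along48 /along; have [->|n4] := eqVneq i i4.
  by rewrite i4_neq_i8; ring.
by case: (i == i8); ring.
Qed.

Lemma is_partial_b i x : sinth x != 0 ->
  is_partial i b x (along48 i (- alpha) (kappa * cotth x / 6) * b x).
Proof.
move=> s0; have -> : b = fun y => b0 * expR (- alpha * y 0 i4) * sinpow y.
  by apply/funext => y; rewrite bE.
apply: is_partial_eq.
  exact: is_partialM (is_partialM (is_partial_cst i b0 x) (is_partial_expR_x4 i x (- alpha)))
                     (is_partial_sinpow i s0).
rewrite /along48 /along; have [->|n4] := eqVneq i i4.
  by rewrite i4_neq_i8; ring.
by case: (i == i8); ring.
Qed.

Lemma is_partial_asq i x : sinth x != 0 ->
  is_partial i asq x (along48 i (2 * alpha) (kappa * cotth x / 3) * asq x).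
Proof.
move=> s0; apply: is_partial_eq; first exact: is_partialM (is_partial_a i s0) (is_partial_a i s0).
by rewrite /along48 /asq; case: (i == i4); last case: (i == i8); field.
Qed.

Lemma is_partial_bsq i x : sinth x != 0 ->
  is_partial i bsq x (along48 i (- (2 * alpha)) (kappa * cotth x / 3) * bsq x).
Proof.
move=> s0; apply: is_partial_eq; first exact: is_partialM (is_partial_b i s0) (is_partial_b i s0).
by rewrite /along48 /bsq; case: (i == i4); last case: (i == i8); field.
Qed.

Lemma sinpow_gt0 y : sinth y != 0 -> 0 < sinpow y.
Proof. by move=> s0; apply: powR_gt0; rewrite exprn_even_gt0. Qed.

Lemma a_gt0 y : sinth y != 0 -> 0 < a y.
Proof. by move=> s0; rewrite aE !mulr_gt0 ?expR_gt0 ?sinpow_gt0. Qed.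

Lemma b_gt0 y : sinth y != 0 -> 0 < b y.
Proof. by move=> s0; rewrite bE !mulr_gt0 ?expR_gt0 ?sinpow_gt0. Qed.

Lemma asq_neq0 y : sinth y != 0 -> asq y != 0.
Proof. by move=> s0; rewrite expf_neq0 // gt_eqF // a_gt0. Qed.

Lemma bsq_neq0 y : sinth y != 0 -> bsq y != 0.
Proof. by move=> s0; rewrite expf_neq0 // gt_eqF // b_gt0. Qed.

Lemma sol_metric_diag y : g y = diag_mx (\row_i formal_g (asq y) (bsq y) (val i)).
Proof.
apply/matrixP => i j; rewrite !mxE /formal_g !nat_ltbE nat_eqbE.
by case: (i == j); rewrite ?mulr1n ?mulr0n.
Qed.

Ltac case_coord i :=
  rewrite /along48 /along ?i4_eqbE ?i8_eqbE;
  let E3 := fresh "E3" in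
  case E3: (Nat.eqb (val i) 3);
    [rewrite ?(eqb3_eqb7 E3) | case: (Nat.eqb (val i) 7)] => /=.

Lemma is_partial_formal_g i n x : sinth x != 0 ->
  is_partial i (fun y => formal_g (asq y) (bsq y) n) x
    (formal_dg (asq x) (bsq x) kappa (cotth x) alpha (val i) n).
Proof.
move=> s0; rewrite /formal_g /formal_dg.
case: n => [|[|[|[|[|[|[|n]]]]]]] /=.
all: try (apply: is_partial_eq; first exact: is_partial_cst; by case_coord i).
all: try (apply: is_partial_eq; first exact: (is_partial_asq i s0); by case_coord i; field).
all: try (apply: is_partial_eq; first exact: (is_partialN (is_partial_bsq i s0));
          by case_coord i; field).
Qed.

Lemma partial_formal_g i n x : sinth x != 0 ->
  partial i (fun y => formal_g (asq y) (bsq y) n) x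
  = formal_dg (asq x) (bsq x) kappa (cotth x) alpha (val i) n.
Proof. by move=> s0; apply/is_partial_val/is_partial_formal_g. Qed.

Lemma is_partial_formal_dg i m n x : sinth x != 0 ->
  is_partial i (fun y => formal_dg (asq y) (bsq y) kappa (cotth y) alpha m n) x
    (formal_ddg (asq x) (bsq x) kappa (cotth x) alpha (val i) m n).
Proof.
move=> s0; rewrite /formal_dg /formal_ddg.
have dC c : is_partial i (fun=> c) x 0 := is_partial_cst i c x.
have dA := is_partial_asq i s0; have dB := is_partial_bsq i s0.
have dQ := is_partialM (is_partialM (dC kappa) (is_partial_cotth i s0)) (dC 3^-1).
case: (Nat.eqb m 3); last case: (Nat.eqb m 7).
all: case: n => [|[|[|[|[|[|[|n]]]]]]] /=.
all: try (apply: is_partial_eq; first exact: dC; by case_coord i).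
all: try (apply: is_partial_eq; first exact: (is_partialM (dC _) dA); by case_coord i; field).
all: try (apply: is_partial_eq; first exact: (is_partialM (dC _) dB); by case_coord i; field).
all: try (apply: is_partial_eq; first exact: (is_partialM dQ dA); by case_coord i; field).
all: try (apply: is_partial_eq; first exact: (is_partialN (is_partialM dQ dB));
          by case_coord i; field).
Qed.

Lemma christoffel_sol y l m n : sinth y != 0 ->
  christoffel g l m n y
  = formal_christoffel (asq y) (bsq y) kappa (cotth y) alpha (val l) (val m) (val n).
Proof.
move=> s0; rewrite (christoffel_diag (d := fun z i => formal_g (asq z) (bsq z) (val i)))
  => [| z | i]; last 2 first.
- exact: sol_metric_diag.
- by rewrite formal_g_neq0 ?asq_neq0 ?bsq_neq0.
by rewrite !partial_formal_g // /formal_christoffel /bracket !ord_eqbE.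
Qed.

Lemma is_partial_formal_christoffel i l m n x : sinth x != 0 ->
  is_partial i (fun y => formal_christoffel (asq y) (bsq y) kappa (cotth y) alpha l m n) x
    (formal_dchristoffel (asq x) (bsq x) kappa (cotth x) alpha (val i) l m n).
Proof.
move=> s0; rewrite /formal_christoffel /formal_dchristoffel /bracket.
have g0 : 2 * formal_g (asq x) (bsq x) l != 0.
  by rewrite mulf_neq0 ?pnatr_eq0 ?formal_g_neq0 ?asq_neq0 ?bsq_neq0.
have dg k' l' := is_partial_formal_dg i k' l' s0.
apply: is_partial_eq.
  apply: is_partialM (is_partialV g0 (is_partialM (is_partial_cst i 2 x)
                                         (is_partial_formal_g i l s0))) _.
  exact: is_partialB (is_partialD (is_partial_if _ (dg m l)) (is_partial_if _ (dg n l)))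
                     (is_partial_if _ (dg l m)).
rewrite mul0r add0r mulNr; congr (_ * _ + _).
by rewrite mulrC -mulNr.
Qed.

Lemma is_partial_christoffel_sol c l m n x : sinth x != 0 ->
  is_partial c (christoffel g l m n) x
    (formal_dchristoffel (asq x) (bsq x) kappa (cotth x) alpha (val c) (val l) (val m) (val n)).
Proof.
move=> s0; apply: near_eq_is_partial (is_partial_formal_christoffel c _ _ _ s0).
apply: filterS (is_partial_near_neq0 (is_partial_sinth c x) s0) => t st.
by rewrite christoffel_sol.
Qed.

Lemma riemann_sol y i j k l : sinth y != 0 ->
  riemann g i j k l y = formal_riemann (asq y) (bsq y) kappa (cotth y) alpha
                          (val i) (val j) (val k) (val l).
Proof.
move=> s0; rewrite /riemann !(is_partial_val (is_partial_christoffel_sol _ _ _ _ s0)).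
under eq_bigr => p _ do rewrite !christoffel_sol //.
by rewrite /formal_riemann -big_ord8.
Qed.

Lemma ricci_sol y m n : sinth y != 0 ->
  ricci g m n y = ricci_closed_form (asq y) (bsq y) (cotth y) rho (val m) (val n).
Proof.
move=> s0; transitivity (formal_ricci (asq y) (bsq y) kappa (cotth y) alpha (val m) (val n)).
  by rewrite /formal_ricci -big_ord8; apply: eq_bigr => k _; rewrite riemann_sol.
apply: formal_ricciE; [exact: asq_neq0 | exact: bsq_neq0 | exact: kappaE
                      | exact: alphaE | exact: ltn_ord | exact: ltn_ord].
Qed.

Lemma ginv_sol y l s : sinth y != 0 ->
  ginv g y l s = if l == s then (formal_g (asq y) (bsq y) (val l))^-1 else 0.
Proof.
move=> s0; apply: (ginv_diag (d := fun z i => formal_g (asq z) (bsq z) (val i))) => [z | i].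
  exact: sol_metric_diag.
by rewrite formal_g_neq0 ?asq_neq0 ?bsq_neq0.
Qed.

Lemma g_sol y m n : g y m n = if m == n then formal_g (asq y) (bsq y) (val m) else 0.
Proof.
apply: (g_diag_entry (d := fun z i => formal_g (asq z) (bsq z) (val i))) => z.
exact: sol_metric_diag.
Qed.

Definition dphi y := sigma * Num.sqrt (5 / 6) * kappa / sinth y.

Lemma is_partial_phi i y : sinth y != 0 -> is_partial i phi y (along i i8 (dphi y)).
Proof.
move=> s0; apply: is_partial_eq.
  exact: is_partialM (is_partial_cst i (sigma * 2^-1 * Num.sqrt (5 / 6)) y)
           (is_partial_comp (is_partial_theta i y) (is_derive_ln_tan_half_sqr s0)).
rewrite /along /dphi mul0r add0r -/(sinth y); case: (i == i8); last by rewrite !mulr0.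
by field.
Qed.

Lemma partial_phi i y : sinth y != 0 -> partial i phi y = along i i8 (dphi y).
Proof. by move=> s0; apply/is_partial_val/is_partial_phi. Qed.

Lemma dphi_sqr y : sinth y != 0 ->
  dphi y ^+ 2 = 5 * (2 * rho ^+ 2) / 3 * (1 + cotth y ^+ 2).
Proof.
move=> s0.
have s2 : sigma ^+ 2 = 1 by case: hsigma => ->; rewrite ?sqrrN expr1n.
have r2 : Num.sqrt (5 / 6) ^+ 2 = 5 / 6 :> R by rewrite sqr_sqrtr // divr_ge0.
have cs : costh y ^+ 2 = 1 - sinth y ^+ 2 by rewrite /costh /sinth -(cos2Dsin2 (theta y)); ring.
rewrite /dphi /cotth kappaE !exprMn_comm ?expr_div_n; try exact: mulrC.
by rewrite s2 r2 cs; field.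
Qed.

Lemma phi_norm_sol y : sinth y != 0 ->
  \sum_(m < 8) \sum_(n < 8) ginv g y m n * partial m phi y * partial n phi y = dphi y ^+ 2.
Proof.
move=> s0; have A0 := asq_neq0 s0; have B0 := bsq_neq0 s0.
under eq_bigr => m _ do under eq_bigr => n _ do
  rewrite ginv_sol // !partial_phi // /along ord_eqbE !i8_eqbE.
rewrite !big_ord_recr !big_ord0 /=.
cbv beta iota zeta delta [formal_g Nat.eqb Nat.ltb Nat.leb andb].
by field; rewrite ?A0 ?B0.
Qed.

Lemma scalar_curv_sol y : sinth y != 0 ->
  scalar_curv g y = 8 * (2 * rho ^+ 2 / 3) + 5 * (2 * rho ^+ 2) / 3 * (1 + cotth y ^+ 2).
Proof.
move=> s0; have A0 := asq_neq0 s0; have B0 := bsq_neq0 s0.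
rewrite /scalar_curv.
under eq_bigr => m _ do under eq_bigr => n _ do rewrite ginv_sol // ricci_sol // ord_eqbE.
rewrite !big_ord_recr !big_ord0 /=.
cbv beta iota zeta delta [ricci_closed_form formal_g Nat.eqb Nat.ltb Nat.leb andb].
by field; rewrite ?A0 ?B0.
Qed.

Lemma einstein_sol x m n : sinth x != 0 ->
  einstein g m n x + L * g x m n = stress g phi m n x.
Proof.
move=> s0; have A0 := asq_neq0 s0; have B0 := bsq_neq0 s0.
have d2 : dphi x * dphi x = 5 * (2 * rho ^+ 2) / 3 * (1 + cotth x ^+ 2).
  by rewrite -expr2 dphi_sqr.
have L2 : L = 2 * rho ^+ 2 by rewrite rho_sqr; field.
rewrite /einstein /stress ricci_sol // scalar_curv_sol // phi_norm_sol // dphi_sqr //.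
rewrite !partial_phi // !g_sol /along !i8_eqbE !ord_eqbE L2.
have : (val m < 8)%N := ltn_ord m; have : (val n < 8)%N := ltn_ord n.
move: (val m) (val n) => {m n} m n.
case: n => [|[|[|[|[|[|[|[|n]]]]]]]] // _; case: m => [|[|[|[|[|[|[|[|m]]]]]]]] // _.
all: cbv beta iota zeta delta [ricci_closed_form formal_g Nat.eqb Nat.ltb Nat.leb andb].
all: by rewrite ?d2; field; rewrite ?A0 ?B0.
Qed.

Lemma sqrt_det_sol y : sinth y != 0 -> Num.sqrt `|\det (g y)| = (a y * b y) ^+ 3.
Proof.
move=> s0; rewrite sol_metric_diag det_diag !big_ord_recr big_ord0 /= !mxE /=.
cbv beta iota zeta delta [formal_g Nat.eqb Nat.ltb Nat.leb andb].
have -> : 1 * asq y * asq y * asq y * -1 * - bsq y * - bsq y * - bsq y * 1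
          = ((a y * b y) ^+ 3) ^+ 2 by rewrite /asq /bsq; ring.
rewrite ger0_norm ?sqr_ge0 // sqrtr_sqr ger0_norm //.
by rewrite exprn_ge0 // mulr_ge0 // ltW ?a_gt0 ?b_gt0.
Qed.

Lemma raised_dphi_sol y m : sinth y != 0 ->
  \sum_(n < 8) ginv g y m n * partial n phi y = along m i8 (dphi y).
Proof.
move=> s0; under eq_bigr => n _ do rewrite ginv_sol // partial_phi //.
rewrite (bigD1 m) //= big1 ?addr0; last first.
  by move=> n /negPf; rewrite eq_sym => ->; rewrite mul0r.
rewrite eqxx /along; case: eqP => [->|_]; last by rewrite mulr0.
by rewrite /i8 inordK // /formal_g /= invr1 mul1r.
Qed.

Definition phi_flux y := (a y * b y) ^+ 3 * dphi y.

Lemma is_partial_phi_flux i x : sinth x != 0 -> is_partial i phi_flux x 0.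
Proof.
move=> s0; have dab := is_partialM (is_partial_a i s0) (is_partial_b i s0).
apply: is_partial_eq.
  apply: is_partialM (is_partialM dab (is_partialM dab dab)) _.
  exact: is_partialM (is_partial_cst i (sigma * Num.sqrt (5 / 6) * kappa) x)
                     (is_partialV s0 (is_partial_sinth i x)).
by rewrite /dphi /cotth; case_coord i; field.
Qed.

Lemma box_sol x : sinth x != 0 -> box g phi x = 0.
Proof.
move=> s0; rewrite /box big1 ?mulr0 // => m _.
apply: is_partial_val; apply: (near_eq_is_partial (f := fun y => along m i8 (phi_flux y))).
  apply: filterS (is_partial_near_neq0 (is_partial_sinth m x) s0) => t st.
  by rewrite raised_dphi_sol // sqrt_det_sol // /along; case: (m == i8); rewrite ?mulr0.
by apply: is_partial_eq (is_partial_if _ (is_partial_phi_flux m s0)) _; case: (m == i8).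
Qed.

Lemma sol_metric_regular m n : twice_partially_derivable_on (sol_U L) (fun y => g y m n).
Proof.
move=> x s0 i j; have -> : (fun y => g y m n) =
    (fun y => if m == n then formal_g (asq y) (bsq y) (val m) else 0).
  by apply/funext => z; rewrite g_sol.
split; first exact/is_partial_derivable/is_partial_if/is_partial_formal_g.
apply: is_partial_derivable (near_eq_is_partial
  (h := partial j (fun y => if m == n then formal_g (asq y) (bsq y) (val m) else 0)) _
  (is_partial_if _ (is_partial_formal_dg i (val j) (val m) s0))).
apply: filterS (is_partial_near_neq0 (is_partial_sinth i x) s0) => t st.
by rewrite partial_if partial_formal_g.
Qed.

Lemma sol_phi_regular : twice_partially_derivable_on (sol_U L) phi.
Proof.
move=> x s0 i j; split; first exact/is_partial_derivable/is_partial_phi.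
apply: is_partial_derivable (near_eq_is_partial (h := partial j phi) _
  (is_partial_if _ (is_partialM (is_partial_cst i (sigma * Num.sqrt (5 / 6) * kappa) x)
                                (is_partialV s0 (is_partial_sinth i x))))).
apply: filterS (is_partial_near_neq0 (is_partial_sinth i x) s0) => t st.
by rewrite partial_phi.
Qed.

Lemma expansion_rate_sol x : sinth x != 0 ->
  2^-1 * partial i4 (fun y => ln (b y / a y)) x = - eps * 3^-1 * Num.sqrt (L / 2).
Proof.
move=> s0; have a0x := a_gt0 s0; have b0x := b_gt0 s0.
have := is_partial_comp (is_partialM (is_partial_b i4 s0)
                           (is_partialV (lt0r_neq0 a0x) (is_partial_a i4 s0)))
                        (is_derive1_ln (divr_gt0 b0x a0x)).
move/is_partial_val => ->.
rewrite /along48 eqxx /alpha /rho; field.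
by rewrite (lt0r_neq0 a0x) (lt0r_neq0 b0x).
Qed.

Definition period : R := pi * Num.sqrt (2 / L).

Lemma kappa_period : kappa * period = pi *+ 2.
Proof.
rewrite /period /kappa mulrCA -sqrtrM ?mulr_ge0 ?ltW //.
have -> : 2 * L * (2 / L) = 2 ^+ 2 by field; rewrite lt0r_neq0.
by rewrite sqrtr_sqr ger0_norm // mulr_natr.
Qed.

Lemma theta_shift x T : theta (x + T *: ev i8) = theta x + kappa * T.
Proof. by rewrite /sol_theta shift_ev_coord eqxx -/kappa; ring. Qed.

Lemma x4_shift x T : (x + T *: ev i8) 0 i4 = x 0 i4.
Proof. by rewrite shift_ev_coord eq_sym i4_neq_i8 addr0. Qed.

Lemma sol_periodic x : sinth x != 0 ->
  sinth (x + period *: ev i8) != 0 /\ a (x + period *: ev i8) = a x /\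
  b (x + period *: ev i8) = b x /\ phi (x + period *: ev i8) = phi x.
Proof.
move=> s0; have th : theta (x + period *: ev i8) = theta x + pi *+ 2.
  by rewrite theta_shift kappa_period.
have sx : sinth (x + period *: ev i8) = sinth x by rewrite /sinth th sinD2pi.
split; first by rewrite sx.
split; first by rewrite !aE /sinpow x4_shift sx.
split; first by rewrite !bE /sinpow x4_shift sx.
rewrite /sol_phi th.
have -> : 2^-1 * (theta x + pi *+ 2) = 2^-1 * theta x + pi by rewrite mulr2n; field.
by rewrite tanDpi.
Qed.

Lemma phi_cos_eq y z : sinth y != 0 -> sinth z != 0 -> phi y = phi z -> costh y = costh z.
Proof.
move=> sy sz; have c0 : sigma * 2^-1 * Num.sqrt (5 / 6) != 0.
  rewrite !mulf_neq0 ?invr_eq0 ?pnatr_eq0 // ?sqrtr_eq0 -?ltNge ?divr_gt0 //.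
  by case: hsigma => ->; rewrite ?oppr_eq0 oner_eq0.
by move/(mulfI c0); apply: cos_eq_of_ln_tan_half_sqr.
Qed.

Lemma phi_period_ge T : 0 < T ->
  (forall x, sinth x != 0 -> sinth (x + T *: ev i8) != 0 /\ phi (x + T *: ev i8) = phi x) ->
  period <= T.
Proof.
move=> T0 per; rewrite -(ler_pM2l kappa_gt0) kappa_period.
apply: cos_shift_invariant_ge2pi => [|t st]; first by rewrite mulr_gt0 ?kappa_gt0.
have tht : theta ((t / kappa) *: ev i8) = t.
  rewrite /sol_theta /ev !mxE !eqxx /= mulr1 -/kappa.
  by field; rewrite lt0r_neq0 // kappa_gt0.
have s0 : sinth ((t / kappa) *: ev i8) != 0 by rewrite /sinth tht.
have [sT phiT] := per _ s0.
by have := phi_cos_eq sT s0 phiT; rewrite /costh theta_shift tht.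
Qed.

Lemma period_eq_2pi : period = pi *+ 2 <-> L = 2^-1.
Proof.
have pi0 := pi_gt0 R; rewrite /period; split => [E | ->].
  have h : Num.sqrt (2 / L) = 2.
    by apply: (mulfI (lt0r_neq0 pi0)); rewrite E mulr_natr.
  have E2 : 2 / L = 2 ^+ 2.
    by rewrite -(sqr_sqrtr (a := 2 / L)) ?divr_ge0 ?ltW // h.
  have -> : L = 2 / 2 ^+ 2 by rewrite -E2; field; exact: lt0r_neq0.
  by field.
have -> : 2 / 2^-1 = 2 ^+ 2 :> R by field.
by rewrite sqrtr_sqr ger0_norm // mulr_natr.
Qed.

End Solution.

Unset Implicit Arguments.

Theorem mainTheorem1 (R : realType) (L a0 b0 eps sigma : R)
  (hL : 0 < L) (ha0 : 0 < a0) (hb0 : 0 < b0)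
  (heps : eps = 1 \/ eps = -1) (hsigma : sigma = 1 \/ sigma = -1) :
  let g := sol_metric L a0 b0 eps in
  let phi := sol_phi L sigma in
  let a := sol_a L a0 eps in
  let b := sol_b L b0 eps in
  let U := sol_U L in
  let P := pi * Num.sqrt (2 / L) in
  let periodic_with (T : R) :=
    forall x, U x -> U (x + T *: ev i8) /\
      a (x + T *: ev i8) = a x /\ b (x + T *: ev i8) = b x /\
      phi (x + T *: ev i8) = phi x in
  (forall m n : 'I_8, twice_partially_derivable_on U (fun y => g y m n))
  /\ twice_partially_derivable_on U phi
  /\ (forall x, U x -> forall m n : 'I_8,
        einstein g m n x + L * g x m n = stress g phi m n x)
  /\ (forall x, U x -> box g phi x = 0)
  /\ (forall x, U x ->
        2^-1 * partial i4 (fun y => ln (b y / a y)) x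
        = - eps * 3^-1 * Num.sqrt (L / 2))
  /\ periodic_with P
  /\ (forall T, 0 < T -> T < P -> ~ periodic_with T)
  /\ (P = 2 * pi <-> L = 2^-1).
Proof.
move=> g phi a b U P periodic_with.
split; first exact: sol_metric_regular.
split; first exact: sol_phi_regular.
split; first by move=> x Ux m n; apply: einstein_sol.
split; first by move=> x Ux; apply: box_sol.
split; first by move=> x Ux; apply: expansion_rate_sol.
split; first by move=> x Ux; apply: sol_periodic.
split; last by rewrite mulr_natl; apply: period_eq_2pi.
move=> T T0 TP per; suff: P <= T by rewrite leNgt TP.
apply: (phi_period_ge hL hsigma T0) => x Ux.
by have [? [_ [_ ?]]] := per x Ux.
Qed.
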